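(* Suppose $c_1\ge-1$, $c_2\ge-1$ and $c_3=\bar c_3(c_1,c_2)$. Then $U^*(x):=(1+\sqrt{1+c_1})(1-x)+(-1-\sqrt{1+c_2})(1+x)$ is the unique $C^1$ solution of $(1-x^2)U'+2xU+\frac12U^2=P_c(x)$ in $(-1,1)$. In particular $U^*(-1)=\tau_2(c_1)$ and $U^*(1)=\tau_1'(c_2)$.
   Context: $P_c(x):=c_1(1-x)+c_2(1+x)+c_3(1-x^2)$ for $c=(c_1,c_2,c_3)$. $\bar c_3(c_1,c_2):=-\frac12(\sqrt{1+c_1}+\sqrt{1+c_2})(\sqrt{1+c_1}+\sqrt{1+c_2}+2)$. $\tau_2(c_1):=2+2\sqrt{1+c_1}$, $\tau_1'(c_2):=-2-2\sqrt{1+c_2}$. *)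

From Stdlib Require Import Reals.
From Coquelicot Require Import Coquelicot.
Open Scope R_scope.

Definition P (c1 c2 c3 x : R) : R :=
  c1 * (1 - x) + c2 * (1 + x) + c3 * (1 - x ^ 2).

Definition c3bar (c1 c2 : R) : R :=
  - / 2 * (sqrt (1 + c1) + sqrt (1 + c2)) * (sqrt (1 + c1) + sqrt (1 + c2) + 2).

Definition tau2 (c1 : R) : R := 2 + 2 * sqrt (1 + c1).
Definition tau1' (c2 : R) : R := -2 - 2 * sqrt (1 + c2).

Definition Ustar (c1 c2 : R) (x : R) : R :=
  (1 + sqrt (1 + c1)) * (1 - x) + (-1 - sqrt (1 + c2)) * (1 + x).

Definition C1_on_open (a b : R) (f : R -> R) : Prop :=
  forall x, a < x < b -> ex_derive f x /\ continuous (Derive f) x.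

Definition solves_ODE (c1 c2 c3 : R) (U : R -> R) : Prop :=
  forall x, -1 < x < 1 ->
    (1 - x ^ 2) * Derive U x + 2 * x * U x + / 2 * (U x) ^ 2 = P c1 c2 c3 x.

(** Write [a = sqrt (1 + c1)], [b = sqrt (1 + c2)].  Since [2 x + U^*(x) = a (1 - x) - b (1 + x)],
    the difference [W = U - U^*] of two solutions satisfies
    [(1 - x^2) W' + (a (1 - x) - b (1 + x)) W + W^2 / 2 = 0], and the integrating factor
    [E = (1 - x)^b (1 + x)^a] turns this into the Riccati equation [y' = - r y^2] for
    [y = W E], with [r = 1 / (2 (1 - x^2) E) >= C / (1 + x), C / (1 - x)].  If [y] were
    positive at some point, it would stay positive towards [-1] ([y] is nonincreasing) while
    [1 / y - C ln (1 + x)] is nondecreasing, which forces [1 / y < 0] near [-1]; hence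
    [y <= 0], and symmetrically at [1], [y >= 0]. *)
From Stdlib Require Import Reals Lra Psatz.
From Coquelicot Require Import Coquelicot.
Open Scope R_scope.

Lemma nondecreasing_of_derive_nonneg (f df : R -> R) (u v : R) : u <= v ->
  (forall x, u <= x <= v -> is_derive f x (df x)) ->
  (forall x, u <= x <= v -> 0 <= df x) ->
  f u <= f v.
Proof.
  intros Huv Hd Hpos.
  destruct (MVT_gen f u v df) as [c [Hc Hmvt]];
    rewrite ?Rmin_left, ?Rmax_right in * by lra.
  - intros x Hx; apply Hd; lra.
  - intros x Hx; apply continuity_pt_filterlim, (ex_derive_continuous f).
    exists (df x); now apply Hd.
  - assert (0 <= df c * (v - u)) by (apply Rmult_le_pos; [apply Hpos|]; lra).
    lra.
Qed.

Lemma riccati_nonpos (y r : R -> R) (a b C : R) : 0 < C ->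
  (forall x, a < x < b -> is_derive y x (- (r x * y x ^ 2))) ->
  (forall x, a < x < b -> C / (x - a) <= r x) ->
  forall x, a < x < b -> y x <= 0.
Proof.
  intros HC Hy Hr x0 Hx0.
  apply Rnot_lt_le; intros Hy0.
  assert (r_nonneg : forall x, a < x < b -> 0 <= r x).
  { intros x Hx. assert (0 < C / (x - a)) by (apply Rdiv_lt_0_compat; lra).
    specialize (Hr x Hx); lra. }
  assert (y_pos : forall x, a < x <= x0 -> 0 < y x).
  { intros x Hx.
    enough (- y x <= - y x0) by lra.
    apply (nondecreasing_of_derive_nonneg (fun t => - y t) (fun t => r t * y t ^ 2));
      [lra| |].
    - intros t Ht. assert (Hdt := Hy t ltac:(lra)).
      auto_derive; [exists (- (r t * y t ^ 2)); exact Hdt |].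
      rewrite (is_derive_unique (fun s : R => y s) _ _ Hdt); ring.
    - intros t Ht. apply Rmult_le_pos; [apply r_nonneg; lra | apply pow2_ge_0]. }
  set (e := - / (C * y x0) - 1).
  assert (He : e < 0).
  { assert (0 < / (C * y x0)) by (apply Rinv_0_lt_compat, Rmult_lt_0_compat; lra).
    unfold e; lra. }
  (* [x] is chosen so that [C ln ((x - a) / (x0 - a)) = - 1 / y x0 - C]. *)
  set (x := a + (x0 - a) * exp e).
  assert (Hx : a < x < x0).
  { assert (exp e < 1) by (rewrite <- exp_0; now apply exp_increasing).
    assert (0 < (x0 - a) * exp e) by (apply Rmult_lt_0_compat; [lra | apply exp_pos]).
    unfold x; nra. }
  assert (Hmono : / y x - C * ln (x - a) <= / y x0 - C * ln (x0 - a)).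
  { apply (nondecreasing_of_derive_nonneg (fun t => / y t - C * ln (t - a))
      (fun t => r t - C / (t - a))); [lra| |].
    - intros t Ht.
      assert (Hyt := y_pos t ltac:(lra)).
      assert (Hdt := Hy t ltac:(lra)).
      auto_derive.
      + repeat split; [exists (- (r t * y t ^ 2)); exact Hdt | lra | lra].
      + rewrite (is_derive_unique (fun s : R => y s) _ _ Hdt). field; lra.
    - intros t Ht. specialize (Hr t ltac:(lra)); lra. }
  assert (Hln : ln (x - a) = ln (x0 - a) + e).
  { replace (x - a) with ((x0 - a) * exp e) by (unfold x; ring).
    rewrite ln_mult by (lra || apply exp_pos). now rewrite ln_exp. }
  assert (0 < / y x) by (apply Rinv_0_lt_compat, y_pos; lra).
  assert (C * e = - / y x0 - C) by (unfold e; field; lra).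
  rewrite Hln in Hmono. nra.
Qed.

Lemma riccati_nonneg (y r : R -> R) (a b C : R) : 0 < C ->
  (forall x, a < x < b -> is_derive y x (- (r x * y x ^ 2))) ->
  (forall x, a < x < b -> C / (b - x) <= r x) ->
  forall x, a < x < b -> 0 <= y x.
Proof.
  intros HC Hy Hr x Hx.
  enough (- y (- - x) <= 0) by (rewrite Ropp_involutive in *; lra).
  apply (riccati_nonpos (fun t => - y (- t)) (fun t => r (- t)) (- b) (- a) C HC);
    [| | lra].
  - intros t Ht. assert (Hdt := Hy (- t) ltac:(lra)).
    auto_derive.
    + exists (- (r (- t) * y (- t) ^ 2)); exact Hdt.
    + rewrite (is_derive_unique (fun s : R => y s) _ _ Hdt). ring.
  - intros t Ht. replace (t - - b) with (b - - t) by ring. apply Hr; lra.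
Qed.

Lemma riccati_vanishes (y r : R -> R) (a b C : R) : 0 < C ->
  (forall x, a < x < b -> is_derive y x (- (r x * y x ^ 2))) ->
  (forall x, a < x < b -> C / (x - a) <= r x) ->
  (forall x, a < x < b -> C / (b - x) <= r x) ->
  forall x, a < x < b -> y x = 0.
Proof.
  intros HC Hy Hl Hr x Hx.
  apply Rle_antisym.
  - exact (riccati_nonpos y r a b C HC Hy Hl x Hx).
  - exact (riccati_nonneg y r a b C HC Hy Hr x Hx).
Qed.

Definition integrating_factor (a b t : R) : R :=
  exp (b * ln (1 - t) + a * ln (1 + t)).

Definition riccati_coef (a b t : R) : R :=
  / (2 * ((1 - t ^ 2) * integrating_factor a b t)).

Lemma integrating_factor_le (a b t : R) : 0 <= a -> 0 <= b -> -1 < t < 1 ->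
  integrating_factor a b t <= exp ((a + b) * ln 2).
Proof.
  intros Ha Hb Ht.
  assert (ln (1 - t) <= ln 2) by (apply ln_le; lra).
  assert (ln (1 + t) <= ln 2) by (apply ln_le; lra).
  assert (Hexp : b * ln (1 - t) + a * ln (1 + t) <= (a + b) * ln 2) by nra.
  unfold integrating_factor.
  destruct (Rle_lt_or_eq_dec _ _ Hexp) as [Hlt | ->]; [|lra].
  now apply Rlt_le, exp_increasing.
Qed.

Lemma riccati_coef_ge (a b t s : R) : 0 <= a -> 0 <= b -> -1 < t < 1 ->
  0 < s -> 1 - t ^ 2 <= 2 * s ->
  / (4 * exp ((a + b) * ln 2)) / s <= riccati_coef a b t.
Proof.
  intros Ha Hb Ht Hs Hts.
  assert (HE := integrating_factor_le a b t Ha Hb Ht).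
  assert (0 < integrating_factor a b t) by apply exp_pos.
  assert (0 < exp ((a + b) * ln 2)) by apply exp_pos.
  assert (0 < 1 - t ^ 2) by nra.
  unfold riccati_coef, Rdiv. rewrite <- Rinv_mult.
  apply Rinv_le_contravar; [apply Rmult_lt_0_compat; [lra | now apply Rmult_lt_0_compat] |].
  assert ((1 - t ^ 2) * integrating_factor a b t <= (2 * s) * exp ((a + b) * ln 2))
    by (apply Rmult_le_compat; nra).
  lra.
Qed.

Lemma is_derive_weighted_riccati (a b : R) (W : R -> R) (t w : R) : -1 < t < 1 ->
  is_derive W t w ->
  (1 - t ^ 2) * w + (a * (1 - t) - b * (1 + t)) * W t + / 2 * W t ^ 2 = 0 ->
  is_derive (fun s => W s * integrating_factor a b s) t
    (- (riccati_coef a b t * (W t * integrating_factor a b t) ^ 2)).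
Proof.
  intros Ht HW Heq.
  assert (HE : 0 < integrating_factor a b t) by apply exp_pos.
  assert (Hw : w = - ((a * (1 - t) - b * (1 + t)) * W t + / 2 * W t ^ 2) / (1 - t ^ 2))
    by (field_simplify_eq; nra).
  unfold integrating_factor in *.
  auto_derive.
  - repeat split; [exists w; exact HW | lra | lra].
  - rewrite (is_derive_unique (fun s : R => W s) _ _ HW), Hw.
    unfold riccati_coef, integrating_factor.
    replace (1 + - t) with (1 - t) by ring.
    field; repeat split; nra.
Qed.

Section Ustar_solution.

Variables c1 c2 : R.
Hypotheses (hc1 : -1 <= c1) (hc2 : -1 <= c2).

Let a := sqrt (1 + c1).
Let b := sqrt (1 + c2).

Lemma is_derive_Ustar (x : R) : is_derive (Ustar c1 c2) x (- (2 + a + b)).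
Proof. unfold Ustar. auto_derive; [easy | fold a b; ring]. Qed.

Lemma Derive_Ustar (x : R) : Derive (Ustar c1 c2) x = - (2 + a + b).
Proof. apply is_derive_unique, is_derive_Ustar. Qed.

Lemma Ustar_C1 : C1_on_open (-1) 1 (Ustar c1 c2).
Proof.
  intros x _. split.
  - exists (- (2 + a + b)); apply is_derive_Ustar.
  - apply (continuous_ext (fun _ => - (2 + a + b))); [|apply continuous_const].
    intros t; now rewrite Derive_Ustar.
Qed.

Lemma Ustar_solves_ODE : solves_ODE c1 c2 (c3bar c1 c2) (Ustar c1 c2).
Proof.
  intros x _. rewrite Derive_Ustar.
  unfold P, c3bar, Ustar. fold a b.
  assert (Ha := sqrt_sqrt (1 + c1) ltac:(lra)).
  assert (Hb := sqrt_sqrt (1 + c2) ltac:(lra)).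
  fold a in Ha; fold b in Hb.
  replace c1 with (a * a - 1) by lra. replace c2 with (b * b - 1) by lra.
  field.
Qed.

Lemma solves_ODE_sub_Ustar (U : R -> R) (t : R) : -1 < t < 1 ->
  solves_ODE c1 c2 (c3bar c1 c2) U ->
  (1 - t ^ 2) * (Derive U t - Derive (Ustar c1 c2) t)
    + (a * (1 - t) - b * (1 + t)) * (U t - Ustar c1 c2 t)
    + / 2 * (U t - Ustar c1 c2 t) ^ 2 = 0.
Proof.
  intros Ht HU.
  transitivity
    (((1 - t ^ 2) * Derive U t + 2 * t * U t + / 2 * U t ^ 2) -
     ((1 - t ^ 2) * Derive (Ustar c1 c2) t + 2 * t * Ustar c1 c2 t
        + / 2 * Ustar c1 c2 t ^ 2)).
  - rewrite !Derive_Ustar. unfold Ustar. fold a b. field.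
  - rewrite (HU t Ht), (Ustar_solves_ODE t Ht). ring.
Qed.

Lemma Ustar_unique (U : R -> R) : C1_on_open (-1) 1 U ->
  solves_ODE c1 c2 (c3bar c1 c2) U ->
  forall x, -1 < x < 1 -> U x = Ustar c1 c2 x.
Proof.
  intros HU HODE x Hx.
  set (W := fun t => U t - Ustar c1 c2 t).
  assert (Ha := sqrt_pos (1 + c1)). assert (Hb := sqrt_pos (1 + c2)).
  fold a in Ha; fold b in Hb.
  assert (Hy : forall t, -1 < t < 1 ->
    is_derive (fun s => W s * integrating_factor a b s) t
      (- (riccati_coef a b t * (W t * integrating_factor a b t) ^ 2))).
  { intros t Ht.
    apply is_derive_weighted_riccati with (w := Derive U t - Derive (Ustar c1 c2) t);
      [exact Ht | | exact (solves_ODE_sub_Ustar U t Ht HODE)].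
    apply (is_derive_minus U (Ustar c1 c2)); apply Derive_correct.
    - now apply HU.
    - now exists (- (2 + a + b)); apply is_derive_Ustar. }
  assert (HC : 0 < / (4 * exp ((a + b) * ln 2))).
  { apply Rinv_0_lt_compat. generalize (exp_pos ((a + b) * ln 2)); lra. }
  assert (Hy0 : W x * integrating_factor a b x = 0).
  { apply (riccati_vanishes _ (riccati_coef a b) (-1) 1 _ HC Hy); [| | exact Hx];
      intros t Ht; apply riccati_coef_ge; (lra || nra). }
  assert (0 < integrating_factor a b x) by apply exp_pos.
  unfold W in Hy0. nra.
Qed.

End Ustar_solution.

Theorem lemma2p5 (c1 c2 c3 : R) (hc1 : -1 <= c1) (hc2 : -1 <= c2)
  (hc3 : c3 = c3bar c1 c2) :
  (C1_on_open (-1) 1 (Ustar c1 c2) /\ solves_ODE c1 c2 c3 (Ustar c1 c2)) /\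
  (forall U : R -> R, C1_on_open (-1) 1 U -> solves_ODE c1 c2 c3 U ->
     forall x, -1 < x < 1 -> U x = Ustar c1 c2 x) /\
  Ustar c1 c2 (-1) = tau2 c1 /\ Ustar c1 c2 1 = tau1' c2.
Proof.
  subst c3.
  split; [split | split].
  - apply Ustar_C1.
  - now apply Ustar_solves_ODE.
  - now apply Ustar_unique.
  - unfold Ustar, tau2, tau1'; split; ring.
Qed.
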